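(* Let $\mathcal X\subset\mathbb{R}^d$ be a finite set of points in general position. Then there exists $\varepsilon_0>0$ such that for every $0<\varepsilon<\varepsilon_0$ and every $r>0$, the family $\{\mathrm{Vor}^\varepsilon_{\mathcal X}(x)\cap B_r(x)\}_{x\in\mathcal X}$ is a good cover of $\bigcup_{x\in\mathcal X}B_r(x)$, i.e. it covers this set and every non-empty finite intersection of its members is contractible.
   Context: General position: no three points collinear and no $d+2$ points on a common sphere. $\mathrm{Vor}_{\mathcal X}(x)=\{y\in\mathbb{R}^d:|y-x|\le|y-x'|\ \forall x'\in\mathcal X\}$, and its $\varepsilon$-offset is $\mathrm{Vor}^\varepsilon_{\mathcal X}(x)=\{p\in\mathbb{R}^d:\exists y\in\mathrm{Vor}_{\mathcal X}(x)\text{ with }|p-y|<\varepsilon\}$. $B_r(x)$ is the ball of radius $r$ centered at $x$. *)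

(* Points of R^d are row vectors 'rV[R]_d
   over an arbitrary R : realType (all realTypes are isomorphic to the reals). *)
From HB Require Import structures.
From mathcomp Require Import all_boot all_order all_algebra.
From mathcomp Require Import all_classical all_reals all_analysis.
Set Implicit Arguments.
Unset Strict Implicit.
Unset Printing Implicit Defensive.
Import Order.TTheory GRing.Theory Num.Theory.
Import numFieldNormedType.Exports.
Local Open Scope classical_set_scope.
Local Open Scope ring_scope.

Section Defs.
Variables (R : realType) (d : nat).
Local Notation V := 'rV[R]_d.

Definition enorm (v : V) : R := Num.sqrt (\sum_(i < d) (v ord0 i) ^+ 2).
Definition edist (x y : V) : R := enorm (x - y).

Definition ball_cl (x : V) (r : R) : set V := [set y | edist y x <= r].

Definition Vor (X : set V) (x : V) : set V :=
  [set y | forall x', X x' -> edist y x <= edist y x'].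

Definition Vor_off (X : set V) (eps : R) (x : V) : set V :=
  [set p | exists2 y, Vor X x y & edist p y < eps].

Definition collinear (a b c : V) : Prop :=
  exists l m : R, (l != 0 \/ m != 0) /\ l *: (b - a) + m *: (c - a) = 0.

Definition general_position (X : set V) : Prop :=
  (forall a b c, X a -> X b -> X c -> a <> b -> a <> c -> b <> c ->
     ~ collinear a b c) /\
  (forall f : 'I_(d.+2) -> V, injective f -> (forall i, X (f i)) ->
     ~ exists (c : V) (rho : R), forall i, edist (f i) c = rho).

Definition contractible (A : set V) : Prop :=
  exists2 p : V, A p &
  exists H : R * V -> V,
    {within [set z : R * V | 0 <= z.1 <= 1 /\ A z.2], continuous H} /\
    (forall t a, 0 <= t <= 1 -> A a -> A (H (t, a))) /\
    (forall a, A a -> H (0, a) = a) /\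
    (forall a, A a -> H (1, a) = p).

Definition good_cover (I : set V) (U : V -> set V) (Y : set V) : Prop :=
  \bigcup_(x in I) U x = Y /\
  (forall S : set V, S `<=` I -> finite_set S -> S !=set0 ->
     (\bigcap_(x in S) U x) !=set0 -> contractible (\bigcap_(x in S) U x)).

End Defs.

From Pilot Require Import Defs.
From HB Require Import structures.
From mathcomp Require Import all_boot all_order all_algebra.
From mathcomp Require Import all_classical all_reals all_analysis.
From mathcomp Require Import ring.
Import Order.TTheory GRing.Theory Num.Theory.
Import numFieldNormedType.Exports.
Local Open Scope classical_set_scope.
Local Open Scope ring_scope.
Local Open Scope convex_scope.

(* Every member Vor^eps(x) ∩ B_r(x) of the family is convex: the Voronoi cell
   is cut out by the conditions |y - x|^2 <= |y - x'|^2, which are affine in y,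
   and the eps-offset and the closed ball are convex because |.|^2 is convex
   along segments.  So every non-empty intersection of members is convex and
   contracts to any of its points along straight segments.  The family covers
   the union of the balls since a point of B_r(x) lies in the Voronoi cell of
   a nearest site x', which is no farther from it than x. *)

Local Notation edist := Defs.edist.

Lemma finite_set_argmin (T : eqType) disp (U : orderType disp) (f : T -> U)
    (A : set T) :
  finite_set A -> A !=set0 -> exists2 m, A m & forall y, A y -> (f m <= f y)%O.
Proof.
move=> /finite_seqP[s ->{A}]; elim: s => [[]//|a s IH _].
have [/IH[m sm mmin]|s0] := pselect ([set` s] !=set0); last first.
  exists a => [|y]; first exact: mem_head.
  by rewrite /= inE => /orP[/eqP->//|ys]; case: s0; exists y.
have [am|ma] := leP (f a) (f m).
  exists a => [|y]; first exact: mem_head.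
  by rewrite /= inE => /orP[/eqP->//|/mmin]; apply: le_trans.
exists m => [|y]; first by rewrite /= inE sm orbT.
by rewrite /= inE => /orP[/eqP->|/mmin//]; apply: ltW.
Qed.

Section convexity.
Variables (R : numDomainType) (M : lmodType R).

Lemma convex_setI (A B : set M) :
  convex_set A -> convex_set B -> convex_set (A `&` B).
Proof.
move=> cA cB x y l; rewrite !inE => -[xA xB] [yA yB].
by split; apply/set_mem; [apply: cA | apply: cB]; apply/mem_set.
Qed.

Lemma convex_bigcap (I : Type) (S : set I) (F : I -> set M) :
  (forall i, S i -> convex_set (F i)) -> convex_set (\bigcap_(i in S) F i).
Proof.
move=> cF x y l; rewrite !inE => xF yF i Si.
by apply/set_mem/cF => //; apply/mem_set; [apply: xF | apply: yF].
Qed.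

Lemma ler_conv (t u u' v v' : R) : 0 <= t <= 1 -> u <= u' -> v <= v' ->
  t * u + (1 - t) * v <= t * u' + (1 - t) * v'.
Proof. by move=> /andP[t0 t1] uu' vv'; rewrite lerD ?ler_wpM2l ?subr_ge0. Qed.

Lemma ltr_conv (t u u' v v' : R) : 0 <= t <= 1 -> u < u' -> v < v' ->
  t * u + (1 - t) * v < t * u' + (1 - t) * v'.
Proof.
move=> /andP[t0 t1] uu' vv'.
have [->|t_neq0] := eqVneq t 0; first by rewrite !mul0r !add0r subr0 !mul1r.
rewrite ltr_leD // ?ltr_pM2l ?ler_wpM2l ?subr_ge0 ?(ltW vv') //.
by rewrite lt_def t_neq0.
Qed.

End convexity.

Section euclidean.
Variables (R : realType) (d : nat).
Local Notation V := 'rV[R]_d.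
Implicit Types (X : set V) (a b p x y z : V) (eps r : R).

Definition sqnorm (v : V) : R := \sum_(i < d) v ord0 i ^+ 2.

Lemma sqnorm_ge0 v : 0 <= sqnorm v.
Proof. by apply: sumr_ge0 => i _; rewrite sqr_ge0. Qed.

Lemma edist_ge0 x y : 0 <= edist x y.
Proof. exact: sqrtr_ge0. Qed.

Lemma edistxx x : edist x x = 0.
Proof.
by rewrite /edist /enorm subrr big1 ?sqrtr0 // => i _; rewrite mxE expr0n.
Qed.

Lemma edist_le x y r : 0 <= r -> (edist y x <= r) = (sqnorm (y - x) <= r ^+ 2).
Proof.
move=> r0; rewrite /edist /enorm -[leRHS](ger0_norm r0) -sqrtr_sqr.
by rewrite ler_sqrt // sqr_ge0.
Qed.

Lemma edist_lt x y r : 0 < r -> (edist y x < r) = (sqnorm (y - x) < r ^+ 2).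
Proof.
move=> r0; rewrite /edist /enorm -[ltRHS](gtr0_norm r0) -sqrtr_sqr.
by rewrite ltr_sqrt // exprn_gt0.
Qed.

Lemma ler_edist x y z :
  (edist y x <= edist y z) = (sqnorm (y - x) <= sqnorm (y - z)).
Proof. by rewrite ler_sqrt // sqnorm_ge0. Qed.

Lemma convE a b (l : {i01 R}) :
  (a : convex_lmodType V) <| l |> b = l%:num *: a + (1 - l%:num) *: b.
Proof. by []. Qed.

Lemma sqnorm_conv (t : R) a b z :
  sqnorm (t *: a + (1 - t) *: b - z) =
  t * sqnorm (a - z) + (1 - t) * sqnorm (b - z) - t * (1 - t) * sqnorm (a - b).
Proof.
rewrite /sqnorm !mulr_sumr -big_split -sumrB.
by apply: eq_bigr => i _; rewrite !mxE /=; ring.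
Qed.

Lemma sqnorm_conv_le (t : R) a b z : 0 <= t <= 1 ->
  sqnorm (t *: a + (1 - t) *: b - z) <=
  t * sqnorm (a - z) + (1 - t) * sqnorm (b - z).
Proof.
move=> /andP[t0 t1].
by rewrite sqnorm_conv gerBl mulr_ge0 ?sqnorm_ge0 ?mulr_ge0 ?subr_ge0.
Qed.

Let i01_bounds (l : {i01 R}) : 0 <= l%:num <= 1.
Proof. by rewrite ge0 le1. Qed.

Lemma convex_ball_cl x r : convex_set (ball_cl x r).
Proof.
move=> a b l; rewrite !inE /ball_cl /= => ha hb.
have r0 : 0 <= r := le_trans (edist_ge0 _ _) ha.
move: ha hb; rewrite convE !edist_le // => ha hb.
apply: le_trans (sqnorm_conv_le _ _ _ _ (i01_bounds l)) _.
have -> : r ^+ 2 = l%:num * r ^+ 2 + (1 - l%:num) * r ^+ 2 by ring.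
exact: ler_conv.
Qed.

Lemma convex_Vor X x : convex_set (Vor X x).
Proof.
move=> a b l; rewrite !inE /Vor /= => ha hb x' Xx'.
rewrite convE ler_edist !sqnorm_conv lerD2r.
by apply: ler_conv (i01_bounds l) _ _; rewrite -ler_edist; [apply: ha | apply: hb].
Qed.

Lemma convex_Vor_off X eps x : convex_set (Vor_off X eps x).
Proof.
move=> a b l; rewrite !inE /Vor_off /= => -[ya Vya ha] [yb Vyb hb].
have eps0 : 0 < eps := le_lt_trans (edist_ge0 _ _) ha.
exists ((ya : convex_lmodType _) <| l |> yb).
  by apply/set_mem/convex_Vor; apply/mem_set.
move: ha hb; rewrite !convE !edist_lt // => ha hb.
set t := l%:num.
have -> : t *: a + (1 - t) *: b - (t *: ya + (1 - t) *: yb) =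
          t *: (a - ya) + (1 - t) *: (b - yb) - 0.
  by apply/rowP => i; rewrite !mxE; ring.
apply: le_lt_trans (sqnorm_conv_le _ _ _ _ (i01_bounds l)) _.
have -> : eps ^+ 2 = t * eps ^+ 2 + (1 - t) * eps ^+ 2 by ring.
by apply: ltr_conv; rewrite ?subr0.
Qed.

Lemma convex_contractible (A : set V) :
  convex_set A -> A !=set0 -> contractible A.
Proof.
move=> cA [p Ap]; exists p => //.
exists (fun z : R * V => z.1 *: p + (1 - z.1) *: z.2); split; [|split; [|split]].
- apply: continuous_subspaceT => z.
  apply: cvgD; first by apply: cvgZ; [exact: cvg_fst | exact: cvg_cst].
  by apply: cvgZ; [apply: cvgB; [exact: cvg_cst | exact: cvg_fst] | exact: cvg_snd].
- move=> t a /andP[t0 t1] Aa.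
  by have := cA p a (Itv01 t0 t1) (mem_set Ap) (mem_set Aa); rewrite inE.
- by move=> a _ /=; rewrite scale0r add0r subr0 scale1r.
- by move=> a _ /=; rewrite scale1r subrr scale0r addr0.
Qed.

Lemma convex_good_cover (I : set V) (U : V -> set V) (Y : set V) :
  \bigcup_(x in I) U x = Y -> (forall x, I x -> convex_set (U x)) ->
  good_cover I U Y.
Proof.
move=> UY cU; split=> // S SI _ _; apply: convex_contractible.
by apply: convex_bigcap => x /SI; apply: cU.
Qed.

Lemma exists_Vor X p : finite_set X -> X !=set0 -> exists2 x, X x & Vor X x p.
Proof. exact: finite_set_argmin. Qed.

Lemma Vor_sub_Vor_off X eps x : 0 < eps -> Vor X x `<=` Vor_off X eps x.
Proof. by move=> eps0 p Vp; exists p; rewrite ?edistxx. Qed.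

Lemma Vor_ball_cl X x (x' : V) r p :
  Vor X x p -> X x' -> ball_cl x' r p -> ball_cl x r p.
Proof. by move=> Vp Xx'; apply: le_trans (Vp x' Xx'). Qed.

Lemma bigcup_Vor_off_ball_cl X eps r : finite_set X -> 0 < eps ->
  \bigcup_(x in X) (Vor_off X eps x `&` ball_cl x r) =
  \bigcup_(x in X) ball_cl x r.
Proof.
move=> fX eps0; apply/seteqP; split=> p [x Xx]; first by move=> [_]; exists x.
have [x' Xx' Vp] : exists2 x', X x' & Vor X x' p by apply: exists_Vor => //; exists x.
move=> Bp; exists x' => //; split; first exact: Vor_sub_Vor_off Vp.
exact: Vor_ball_cl Vp Xx Bp.
Qed.

End euclidean.

Theorem lemma3p8 (R : realType) (d : nat) (X : set 'rV[R]_d) :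
  finite_set X -> general_position X ->
  exists2 eps0 : R, 0 < eps0 &
    forall eps r : R, 0 < eps -> eps < eps0 -> 0 < r ->
      good_cover X (fun x => Vor_off X eps x `&` ball_cl x r)
                 (\bigcup_(x in X) ball_cl x r).
Proof.
move=> fX _; exists 1 => // eps r eps0 _ _.
apply: convex_good_cover; first exact: bigcup_Vor_off_ball_cl.
by move=> x _; apply: convex_setI; [exact: convex_Vor_off | exact: convex_ball_cl].
Qed.
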